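(* Let $H=(V,E)$ be a hypergraph whose vertex set $V$ is a partition of $[n]$ into sets of cardinality at least $2$, and suppose $H$ is downward-closed (for every $e\in E$ and every $e'\subseteq e$ with $|e'|>1$, $e'\in E$). Let $D=\{\bar i_I\}_{I\in V}$ with $\bar i_I\in I$ for each $I\in V$. Let $a\cdot w\le\delta$ ($a\in\mathbb{R}^{\mathcal{J}^H}$, $\delta\in\mathbb{R}$) be a valid inequality for $\mathrm{MC}^H$ such that $\{J\in\mathcal{J}^H: a_J\ne 0\}\subseteq\mathcal{J}^H_\le(D)$. Then $a\cdot w\le\delta$ is facet-inducing for $\mathrm{MC}^H$ if and only if $\operatorname{proj}_{\mathcal{J}^H_\le(D)}a\cdot v\le\delta$ is facet-inducing for $\mathrm{MC}^H_\le(D)$.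
   Context: Let $n$ be a positive integer, $[n]=\{1,\dots,n\}$. A hypergraph $H=(V,E)$ here has as vertex set $V$ a family of pairwise disjoint subsets of $[n]$, each of cardinality at least $2$, and hyperedge set $E$ consisting of subsets $e\subseteq V$ with $|e|\ge 2$. Write $L(V)=\{\{I\}: I\in V\}$. For a nonempty $e\subseteq V$, $\mathcal{J}^e$ denotes the family of sets $J\subseteq \bigcup_{I\in e} I$ with $|J\cap I|=1$ for every $I\in e$. Let $\mathcal{J}^H=\bigcup_{e\in L(V)\cup E}\mathcal{J}^e$. For a vector $w$ indexed by sets, write $w_i=w_{\{i\}}$ and $w(A)=\sum_{i\in A}w_i$. Let $\mathscr{S}^H=\{w\in\{0,1\}^{\mathcal{J}^H}: w(I)=1\ \forall I\in V;\ w_J=\prod_{i\in J}w_i\ \forall J\in\mathcal{J}^H, |J|>1\}$ and $\mathrm{MC}^H=\operatorname{conv}\mathscr{S}^H$. For $D$ as in the claim, $\mathcal{J}^H_\le(D)=\{J\in\mathcal{J}^H: J\subseteq[n]\setminus D\}$ and $\mathrm{MC}^H_\le(D)=\operatorname{conv}\{v\in\{0,1\}^{\mathcal{J}^H_\le(D)}: v(I\setminus D)\le 1\ \forall I\in V;\ v_J=\prod_{i\in J}v_i\ \forall J\in\mathcal{J}^H_\le(D), |J|>1\}$. $\operatorname{proj}_{S'}$ extracts coordinates indexed by $S'$. *)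

From HB Require Import structures.
From mathcomp Require Import all_boot all_order all_algebra.
From mathcomp Require Import reals.
Set Implicit Arguments. Unset Strict Implicit. Unset Printing Implicit Defensive.
Import Order.TTheory GRing.Theory Num.Theory.
Local Open Scope ring_scope.

Section Polyhedra.
Variable R : realType.
Variable K : finType.
Notation vec := {ffun K -> R}.

Definition dotv (a w : vec) : R := \sum_k a k * w k.

Definition conv (S : vec -> Prop) (x : vec) : Prop :=
  exists (m : nat) (p : 'I_m -> vec) (l : 'I_m -> R),
    [/\ (forall i, S (p i)), (forall i, 0 <= l i), \sum_i l i = 1
      & forall k, x k = \sum_i l i * p i k].

Definition lin_indep (s : seq vec) : Prop :=
  forall c : 'I_(size s) -> R,
    (forall k, \sum_i c i * (s`_i) k = 0) -> forall i, c i = 0.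

Definition aff_indep (s : seq vec) : Prop :=
  match s with
  | [::] => True
  | p0 :: ps => lin_indep [seq [ffun k => p k - p0 k] : {ffun K -> R} | p : {ffun K -> R} <- ps]
  end.

(* X has (affine) dimension d (d = -1 iff X is empty):
   the maximal number of affinely independent points of X is d + 1 *)
Definition has_dim (X : vec -> Prop) (d : int) : Prop :=
  (exists s : seq vec, (forall x, x \in s -> X x) /\ aff_indep s
                       /\ (size s)%:Z = d + 1)
  /\ (forall s : seq vec, (forall x, x \in s -> X x) -> aff_indep s ->
         (size s)%:Z <= d + 1).

Definition valid_ineq (P : vec -> Prop) (a : vec) (delta : R) : Prop :=
  forall x, P x -> dotv a x <= delta.

Definition facet_inducing (P : vec -> Prop) (a : vec) (delta : R) : Prop :=
  valid_ineq P a delta /\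
  exists d : int, has_dim P d /\
                  has_dim (fun x => P x /\ dotv a x = delta) (d - 1).

End Polyhedra.

(* [n] = {1..n} is represented by 'I_n = {0..n-1}. *)
Section Hyper.
Variable n : nat.
Notation elt := 'I_n.

Definition Jfam (e : {set {set elt}}) (J : {set elt}) : bool :=
  (J \subset cover e) && [forall I in e, #|J :&: I| == 1].

Definition LV (V : {set {set elt}}) : {set {set {set elt}}} :=
  [set [set I] | I in V].

Definition JH (V : {set {set elt}}) (E : {set {set {set elt}}}) : {set {set elt}} :=
  [set J | [exists e, (e \in LV V :|: E) && Jfam e J]].

Definition JHle V E (D : {set elt}) : {set {set elt}} :=
  [set J in JH V E | J \subset ~: D].

Definition idx (A : {set {set elt}}) := {J : {set elt} | J \in A}.

Variable R : realType.

(* w_J, extended by 0 outside the index family *)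
Definition coord (A : {set {set elt}}) (w : {ffun idx A -> R}) (J : {set elt}) : R :=
  if insub J is Some j then w j else 0.

Definition wi (A : {set {set elt}}) (w : {ffun idx A -> R}) (i : elt) : R :=
  coord w [set i].

Definition SH V E (w : {ffun idx (JH V E) -> R}) : Prop :=
  [/\ (forall J, w J = 0 \/ w J = 1),
      (forall I, I \in V -> \sum_(i in I) wi w i = 1)
    & (forall J : idx (JH V E), (1 < #|val J|)%N -> w J = \prod_(i in val J) wi w i)].

Definition MCH V E : {ffun idx (JH V E) -> R} -> Prop := conv (@SH V E).

Definition SHle V E D (v : {ffun idx (JHle V E D) -> R}) : Prop :=
  [/\ (forall J, v J = 0 \/ v J = 1),
      (forall I, I \in V -> \sum_(i in I :\: D) wi v i <= 1)
    & (forall J : idx (JHle V E D), (1 < #|val J|)%N -> v J = \prod_(i in val J) wi v i)].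

Definition MCHle V E D : {ffun idx (JHle V E D) -> R} -> Prop := conv (@SHle V E D).

Definition projle V E D (a : {ffun idx (JH V E) -> R}) : {ffun idx (JHle V E D) -> R} :=
  [ffun J => coord a (val J)].

End Hyper.

Arguments SH {n R} V E w.
Arguments SHle {n R} V E D v.
Arguments MCH {n R} V E _.
Arguments MCHle {n R} V E D _.
Arguments projle {n R} V E D a.

From HB Require Import structures.
From mathcomp Require Import all_boot all_order all_algebra.
From mathcomp Require Import reals.
Import Order.TTheory GRing.Theory Num.Theory.
Local Open Scope ring_scope.

(* The projection onto the coordinates in J^H_<=(D) is an affine bijection from
   MC^H onto MC^H_<=(D).  On a vertex w of MC^H, each w_J is the monomial
   prod_(i in J) w_i; substituting w_k = 1 - sum_(i in I, i <> k) w_i for every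
   k in J that lies in D (k = ibar_I) rewrites it as an affine combination of
   monomials avoiding D, which are again in J^H because H is downward closed.
   Hence all coordinates are affine functions of the projected ones, and the
   same substitution lifts every vertex of MC^H_<=(D) back to a vertex of MC^H.
   Affine bijections preserve convex hulls and affine dimension, and since a
   vanishes outside J^H_<=(D) the face a.w = delta is carried onto the face
   (proj a).v = delta; so facets correspond to facets. *)

Set Implicit Arguments. Unset Strict Implicit. Unset Printing Implicit Defensive.

Section AffineMaps.
Variable R : realType.

Definition affmap (K1 K2 : finType) (f : {ffun K1 -> R} -> {ffun K2 -> R}) : Prop :=
  exists (M : K2 -> K1 -> R) (b : K2 -> R), forall x k, f x k = \sum_j M k j * x j + b k.

Lemma affmap_select (K1 K2 : finType) (h : K2 -> K1) (f : {ffun K1 -> R} -> {ffun K2 -> R}) :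
  (forall x k, f x k = x (h k)) -> affmap f.
Proof.
move=> fE; exists (fun k j => (j == h k)%:R), (fun _ => 0) => x k.
rewrite fE addr0 (bigD1 (h k)) //= eqxx mul1r big1 ?addr0 // => j /negbTE jk.
by rewrite jk mul0r.
Qed.

(* Coefficients indexed by [nat] rather than ['I_(size s)], so that lists of
   equal but not convertible sizes can be compared. *)
Lemma lin_indep_nat (K : finType) (s : seq {ffun K -> R}) :
  lin_indep s <->
  (forall c : nat -> R, (forall k, \sum_(0 <= i < size s) c i * s`_i k = 0) ->
     forall i, (i < size s)%N -> c i = 0).
Proof.
split=> [indep c c0 i lt_i_s | indep c c0 i].
  apply: (indep (fun j : 'I_(size s) => c j) _ (Ordinal lt_i_s)) => k.
  by have := c0 k; rewrite big_mkord.
pose c' j := oapp c 0 (insub j : option 'I_(size s)).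
have c'E (j : 'I_(size s)) : c' j = c j by rewrite /c' valK.
rewrite -c'E; apply: indep => // k.
by rewrite big_mkord -[RHS](c0 k); apply: eq_bigr => j _; rewrite c'E.
Qed.

Lemma lin_indep_linear_preimage (K0 K1 K2 : finType) (s : seq {ffun K0 -> R})
    (u : {ffun K0 -> R} -> {ffun K1 -> R}) (v : {ffun K0 -> R} -> {ffun K2 -> R})
    (M : K1 -> K2 -> R) :
  (forall x k, x \in s -> u x k = \sum_j M k j * v x j) ->
  lin_indep (map u s) -> lin_indep (map v s).
Proof.
rewrite !lin_indep_nat !size_map => uE indep c c0 i0 lt_i0_s.
apply: indep lt_i0_s => k.
transitivity (\sum_(0 <= i < size s) \sum_j M k j * (c i * (map v s)`_i j)).
  apply: eq_big_nat => i /andP[_ lt_i_s].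
  rewrite !(nth_map 0) // uE ?mem_nth // mulr_sumr.
  by apply: eq_bigr => j _; rewrite mulrCA.
rewrite exchange_big big1 // => j _.
by rewrite -mulr_sumr c0 mulr0.
Qed.

Lemma aff_indep_map (K1 K2 : finType) (f : {ffun K1 -> R} -> {ffun K2 -> R}) g s :
  affmap g -> {in s, cancel f g} -> aff_indep s -> aff_indep (map f s).
Proof.
case: s => [//|p0 ps] [M [b gE]] fK /=; rewrite -map_comp.
apply: (lin_indep_linear_preimage (M := M)) => p k p_ps; rewrite /= !ffunE.
rewrite -[p in LHS]fK ?inE ?p_ps ?orbT // -[p0 in LHS]fK ?mem_head // !gE.
rewrite opprD addrACA subrr addr0 -sumrB.
by apply: eq_bigr => j _; rewrite ffunE mulrBr.
Qed.

Lemma affmap_conv_comb (K1 K2 : finType) (f : {ffun K1 -> R} -> {ffun K2 -> R})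
    m (p : 'I_m -> {ffun K1 -> R}) (l : 'I_m -> R) (x : {ffun K1 -> R}) :
  affmap f -> \sum_i l i = 1 -> (forall k, x k = \sum_i l i * p i k) ->
  forall k, f x k = \sum_i l i * f (p i) k.
Proof.
move=> [M [b fE]] l1 xE k; rewrite fE.
under [RHS]eq_bigr do rewrite fE mulrDr.
rewrite big_split /= -mulr_suml l1 mul1r; congr (_ + _).
under eq_bigr do rewrite xE mulr_sumr.
rewrite exchange_big /=; apply: eq_bigr => i _.
by rewrite mulr_sumr; apply: eq_bigr => j _; rewrite mulrCA.
Qed.

Record affine_bij (K1 K2 : finType) (X : {ffun K1 -> R} -> Prop) (Y : {ffun K2 -> R} -> Prop)
    (f : {ffun K1 -> R} -> {ffun K2 -> R}) (g : {ffun K2 -> R} -> {ffun K1 -> R}) : Prop :=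
  AffineBij {
    affine_bij_affmap : affmap f;
    affine_bij_affmap_inv : affmap g;
    affine_bij_maps : forall x, X x -> Y (f x);
    affine_bij_maps_inv : forall y, Y y -> X (g y);
    affine_bij_K : forall x, X x -> g (f x) = x;
    affine_bij_Kinv : forall y, Y y -> f (g y) = y }.

Lemma affine_bij_sym (K1 K2 : finType) X Y
    (f : {ffun K1 -> R} -> {ffun K2 -> R}) g :
  affine_bij X Y f g -> affine_bij Y X g f.
Proof. by case. Qed.

Lemma has_dim_affine_bij (K1 K2 : finType) X Y
    (f : {ffun K1 -> R} -> {ffun K2 -> R}) g d :
  affine_bij X Y f g -> has_dim X d -> has_dim Y d.
Proof.
case=> aff_f aff_g XY YX fK gK [[s [sX [indep_s size_s]]] dim_max]; split.
  exists (map f s); split; first by move=> _ /mapP[x xs ->]; apply/XY/sX.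
  split; last by rewrite size_map.
  by apply: aff_indep_map aff_g _ indep_s => x xs; apply/fK/sX.
move=> t tY indep_t; rewrite -(size_map g); apply: dim_max.
  by move=> _ /mapP[y yt ->]; apply/YX/tY.
by apply: aff_indep_map aff_f _ indep_t => y yt; apply/gK/tY.
Qed.

Definition face (K : finType) (X : {ffun K -> R} -> Prop) a delta x : Prop :=
  X x /\ dotv a x = delta.

Section Transport.
Variables (K1 K2 : finType) (X : {ffun K1 -> R} -> Prop) (Y : {ffun K2 -> R} -> Prop).
Variables (f : {ffun K1 -> R} -> {ffun K2 -> R}) (g : {ffun K2 -> R} -> {ffun K1 -> R}).
Variables (a : {ffun K1 -> R}) (b : {ffun K2 -> R}) (delta : R).
Hypothesis fg : affine_bij X Y f g.
Hypothesis dot_f : forall x, X x -> dotv b (f x) = dotv a x.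

Lemma dotv_affine_bij_inv y : Y y -> dotv a (g y) = dotv b y.
Proof.
by move=> Yy; rewrite -dot_f ?(affine_bij_Kinv fg) //; apply: (affine_bij_maps_inv fg).
Qed.

Lemma face_affine_bij : affine_bij (face X a delta) (face Y b delta) f g.
Proof.
case: (fg) => aff_f aff_g XY YX fK gK; split=> //.
- by move=> x [Xx ax]; split; [apply: XY | rewrite dot_f].
- by move=> y [Yy By]; split; [apply: YX | rewrite dotv_affine_bij_inv].
- by move=> x [Xx _]; apply: fK.
- by move=> y [Yy _]; apply: gK.
Qed.

Lemma valid_ineq_transport : valid_ineq X a delta -> valid_ineq Y b delta.
Proof.
by move=> valid_a y Yy; rewrite -dotv_affine_bij_inv //; apply/valid_a/(affine_bij_maps_inv fg).
Qed.

Lemma facet_inducing_transport :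
  facet_inducing X a delta -> facet_inducing Y b delta.
Proof.
move=> [valid_a [d [dimX dim_face]]]; split; first exact: valid_ineq_transport.
exists d; split; first exact: has_dim_affine_bij fg dimX.
exact: has_dim_affine_bij face_affine_bij dim_face.
Qed.

End Transport.

Lemma facet_inducing_affine_bij (K1 K2 : finType) X Y
    (f : {ffun K1 -> R} -> {ffun K2 -> R}) g a b delta :
  affine_bij X Y f g -> (forall x, X x -> dotv b (f x) = dotv a x) ->
  facet_inducing X a delta <-> facet_inducing Y b delta.
Proof.
move=> fg dot_f; split; first exact: (facet_inducing_transport fg dot_f).
exact/(facet_inducing_transport (affine_bij_sym fg))/(dotv_affine_bij_inv fg dot_f).
Qed.

Lemma conv_affmap (K1 K2 : finType) (S1 : {ffun K1 -> R} -> Prop) (S2 : {ffun K2 -> R} -> Prop) f x :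
  affmap f -> (forall y, S1 y -> S2 (f y)) -> conv S1 x -> conv S2 (f x).
Proof.
move=> aff_f S12 [m [p [l [pS l_ge0 l1 xE]]]].
exists m, (fun i => f (p i)), l; split=> // [i|]; first exact/S12/pS.
exact: affmap_conv_comb.
Qed.

Lemma conv_affmap_cancel (K1 K2 : finType) (S : {ffun K1 -> R} -> Prop)
    (f : {ffun K1 -> R} -> {ffun K2 -> R}) g x :
  affmap f -> affmap g -> (forall y, S y -> g (f y) = y) -> conv S x -> g (f x) = x.
Proof.
move=> aff_f aff_g fK [m [p [l [pS _ l1 xE]]]]; apply/ffunP => k.
rewrite (affmap_conv_comb aff_g l1 (affmap_conv_comb aff_f l1 xE)) xE.
by apply: eq_bigr => i _; rewrite fK.
Qed.

Lemma conv_affine_bij (K1 K2 : finType) S1 S2 (f : {ffun K1 -> R} -> {ffun K2 -> R}) g :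
  affine_bij S1 S2 f g -> affine_bij (conv S1) (conv S2) f g.
Proof.
case=> aff_f aff_g S12 S21 fK gK; split=> //.
- by move=> x; apply: conv_affmap.
- by move=> y; apply: conv_affmap.
- by move=> x; apply: conv_affmap_cancel aff_f aff_g fK.
- by move=> y; apply: conv_affmap_cancel aff_g aff_f gK.
Qed.

End AffineMaps.

Section AffineThrough.
Variables (R : realType) (K1 K2 : finType).
Variables (S : {ffun K1 -> R} -> Prop) (P : {ffun K1 -> R} -> {ffun K2 -> R}).

Definition affine_through (h : {ffun K1 -> R} -> R) : Prop :=
  exists (m : {ffun K2 -> R}) (c : R), forall w, S w -> h w = dotv m (P w) + c.

Lemma eq_affine_through h1 h2 :
  (forall w, S w -> h1 w = h2 w) -> affine_through h1 -> affine_through h2.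
Proof. by move=> h12 [m [c hE]]; exists m, c => w Sw; rewrite -h12 // hE. Qed.

Lemma affine_through_cst c : affine_through (fun _ => c).
Proof.
by exists 0, c => w _; rewrite /dotv big1 ?add0r // => k _; rewrite ffunE mul0r.
Qed.

Lemma affine_through_proj k : affine_through (fun w => P w k).
Proof.
exists [ffun k' => (k' == k)%:R], 0 => w _.
rewrite addr0 /dotv (bigD1 k) //= ffunE eqxx mul1r big1 ?addr0 // => k' /negbTE k'k.
by rewrite ffunE k'k mul0r.
Qed.

Lemma affine_throughB h1 h2 :
  affine_through h1 -> affine_through h2 -> affine_through (fun w => h1 w - h2 w).
Proof.
move=> [m1 [c1 h1E]] [m2 [c2 h2E]]; exists (m1 - m2), (c1 - c2) => w Sw.
rewrite h1E // h2E // /dotv opprD addrACA -sumrB.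
by congr (_ + _); apply: eq_bigr => k _; rewrite !ffunE mulrBl.
Qed.

Lemma affine_through_sum (I : finType) (A : {pred I}) (h : I -> {ffun K1 -> R} -> R) :
  (forall i, i \in A -> affine_through (h i)) ->
  affine_through (fun w => \sum_(i in A) h i w).
Proof.
move=> hA.
have /fin_all_exists[mc mcE] : forall i, exists mc : {ffun K2 -> R} * R,
    i \in A -> forall w, S w -> h i w = dotv mc.1 (P w) + mc.2.
  move=> i; case: (boolP (i \in A)) => [/hA[m [c hE]]|_]; first by exists (m, c).
  by exists (0, 0).
exists (\sum_(i in A) (mc i).1), (\sum_(i in A) (mc i).2) => w Sw.
rewrite /dotv; under [X in _ = X + _]eq_bigr do rewrite sum_ffunE mulr_suml.
by rewrite exchange_big -big_split; apply: eq_bigr => i Ai; rewrite mcE.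
Qed.

Lemma affine_retraction :
  (forall j, affine_through (fun w => w j)) ->
  exists T, affmap T /\ forall w, S w -> T (P w) = w.
Proof.
move=> coordA.
have /fin_all_exists[mc mcE] : forall j, exists mc : {ffun K2 -> R} * R,
    forall w, S w -> w j = dotv mc.1 (P w) + mc.2.
  by move=> j; have [m [c hE]] := coordA j; exists (m, c).
exists (fun v => [ffun j => dotv (mc j).1 v + (mc j).2]); split.
  by exists (fun j k => (mc j).1 k), (fun j => (mc j).2) => v j; rewrite ffunE.
by move=> w Sw; apply/ffunP => j; rewrite ffunE mcE.
Qed.

End AffineThrough.

Section Transversals.
Variables (n : nat) (V : {set {set 'I_n}}).
Hypothesis tV : trivIset V.

Lemma notin_other_block I x : I \in V -> I != pblock V x -> x \notin I.
Proof. by move=> IV; apply: contra => xI; rewrite (def_pblock tV IV xI). Qed.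

Variables (e : {set {set 'I_n}}) (J : {set 'I_n}) (k : 'I_n).
Hypotheses (eV : e \subset V) (Je : Jfam e J) (kJ : k \in J).

Lemma Jfam_pblock : pblock V k \in e /\ J :&: pblock V k = [set k].
Proof.
case/andP: Je => /subsetP J_cover /forall_inP J_meet.
have /bigcupP[I Ie kI] := J_cover k kJ.
rewrite (def_pblock tV (subsetP eV I Ie) kI); split=> //.
have /cards1P[x JIx] := J_meet I Ie.
have : k \in J :&: I by rewrite inE kJ kI.
by rewrite JIx inE => /eqP ->.
Qed.

Lemma Jfam_delete : Jfam (e :\ pblock V k) (J :\ k).
Proof.
have [ke JI] := Jfam_pblock.
case/andP: Je => /subsetP J_cover /forall_inP J_meet; apply/andP; split.
  apply/subsetP => x /setD1P[xk xJ].
  have /bigcupP[I Ie xI] := J_cover x xJ.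
  apply/bigcupP; exists I => //; rewrite !inE Ie andbT.
  by apply: contra_neq xk => IE; apply/set1P; rewrite -JI inE xJ -IE.
apply/forall_inP => I /setD1P[Ik Ie].
have kI := notin_other_block (subsetP eV I Ie) Ik.
rewrite setIDAC (setDidPl _) ?J_meet // disjoint_sym disjoints1 inE negb_and.
by rewrite kI orbT.
Qed.

Lemma Jfam_swap i : i \in pblock V k -> Jfam e (i |: (J :\ k)).
Proof.
move=> ik; have [ke JI] := Jfam_pblock.
case/andP: Je => /subsetP J_cover /forall_inP J_meet; apply/andP; split.
  apply/subsetP => x /setU1P[-> | /setD1P[_ /J_cover //]].
  by apply/bigcupP; exists (pblock V k).
apply/forall_inP => I Ie; case: (eqVneq I (pblock V k)) => [-> | Ik].
  apply/cards1P; exists i; apply/setP => x; rewrite !inE.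
  case: (eqVneq x i) => [-> | xi] //=; apply/negP => /andP[/andP[xk xJ] x_blk].
  have : x \in J :&: pblock V k by rewrite inE xJ x_blk.
  by rewrite JI inE (negbTE xk).
have kI := notin_other_block (subsetP eV I Ie) Ik.
have iI : i \notin I.
  apply: notin_other_block (subsetP eV I Ie) _.
  by rewrite (def_pblock tV (subsetP eV _ ke) ik).
suff -> : (i |: (J :\ k)) :&: I = J :&: I by apply: J_meet.
apply/setP => x; rewrite !inE; case: (eqVneq x i) => [-> | _]; first by rewrite (negbTE iI) !andbF.
by case: (eqVneq x k) => [-> | _]; rewrite ?(negbTE kI) ?andbF.
Qed.

End Transversals.

Lemma prod_pivot (R : comPzRingType) (T : finType) (x : T -> R) (I J : {set T}) k :
  J :&: I = [set k] -> \sum_(i in I) x i = 1 ->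
  \prod_(j in J) x j =
    \prod_(j in J :\ k) x j - \sum_(i in I :\ k) \prod_(j in i |: (J :\ k)) x j.
Proof.
move=> JI sumI; have /setIP[kJ kI] : k \in J :&: I by rewrite JI set11.
have xk : x k = 1 - \sum_(i in I :\ k) x i by rewrite -sumI (big_setD1 k kI) addrK.
rewrite (big_setD1 k kJ) /= xk mulrBl mul1r mulr_suml; congr (_ - _).
apply: eq_bigr => i /setD1P[ik iI]; rewrite big_setU1 //= !inE negb_and negbK (negbTE ik) /=.
by apply: contra_neqN ik => iJ; apply/set1P; rewrite -JI inE iJ.
Qed.

Definition binary (R : numDomainType) (x : R) : Prop := x = 0 \/ x = 1.

Section Binary.
Variable R : numDomainType.

Lemma binary_ge0 (x : R) : binary x -> 0 <= x.
Proof. by case=> ->. Qed.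

Lemma binary_prod (T : finType) (A : {pred T}) (x : T -> R) :
  (forall i, i \in A -> binary (x i)) -> binary (\prod_(i in A) x i).
Proof.
move=> xA; apply: (big_ind (@binary R)); [by right | | exact: xA].
by move=> _ _ [->|->] [->|->]; rewrite ?mulr0 ?mul0r ?mulr1; [left|left|left|right].
Qed.

Lemma binary_sum (T : finType) (A : {set T}) (x : T -> R) :
  (forall i, i \in A -> binary (x i)) -> \sum_(i in A) x i <= 1 ->
  binary (\sum_(i in A) x i).
Proof.
move=> xA sum_le1; have [i /andP[iA /eqP xi1] | no1] := pickP (fun i => (i \in A) && (x i == 1)).
  right; apply/eqP; rewrite eq_le sum_le1 (big_setD1 i iA) /= xi1 lerDl.
  by apply: sumr_ge0 => j /setD1P[_ /xA/binary_ge0].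
left; apply: big1 => i iA; case: (xA i iA) => // xi1.
by have := no1 i; rewrite iA xi1 eqxx.
Qed.

End Binary.

Section Coordinates.
Variables (n : nat) (R : realType) (A : {set {set 'I_n}}).

Lemma coord_val (x : {ffun idx A -> R}) (j : idx A) : coord x (val j) = x j.
Proof. by rewrite /coord valK. Qed.

Lemma coord_Sub (x : {ffun idx A -> R}) J (JA : J \in A) : coord x J = x (Sub J JA).
Proof. by rewrite /coord insubT. Qed.

Lemma binary_coord (x : {ffun idx A -> R}) J : (forall j, binary (x j)) -> binary (coord x J).
Proof. by move=> x01; rewrite /coord; case: insubP => [j _ _ | _]; [apply: x01 | left]. Qed.

End Coordinates.

Section Hypergraph.
Variables (n : nat) (V : {set {set 'I_n}}) (E : {set {set {set 'I_n}}}).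
Hypothesis partV : partition V [set: 'I_n].
Hypothesis E_sub : forall e, e \in E -> e \subset V /\ (1 < #|e|)%N.
Hypothesis E_down :
  forall e e' : {set {set 'I_n}}, e \in E -> e' \subset e -> (1 < #|e'|)%N -> e' \in E.

Let tV : trivIset V := partition_trivIset partV.

Lemma pblockV i : pblock V i \in V.
Proof. by rewrite pblock_mem // (cover_partition partV). Qed.

Lemma edge_subset e : e \in LV V :|: E -> e \subset V.
Proof. by case/setUP => [/imsetP[I IV ->] | /E_sub[]]; rewrite ?sub1set. Qed.

Lemma edge_neq0 e : e \in LV V :|: E -> e != set0.
Proof.
case/setUP => [/imsetP[I _ ->] | /E_sub[_ e_gt1]]; first by apply/set0Pn; exists I; rewrite set11.
by rewrite -card_gt0 ltnW.
Qed.

Lemma edge_delete e I :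
  e \in LV V :|: E -> I \in e -> (e :\ I == set0) || (e :\ I \in LV V :|: E).
Proof.
case/setUP => [/imsetP[I0 _ ->] /set1P -> | eE Ie]; first by rewrite setDv eqxx.
have [eV e_gt1] := E_sub eE.
have card_eI : #|e| = #|e :\ I|.+1 by rewrite (cardsD1 I e) Ie.
case: (ltnP 1 #|e :\ I|) => [eI_gt1 | eI_le1].
  by rewrite [_ \in _ :|: _]inE (E_down eE (subsetDl _ _) eI_gt1) !orbT.
have /cards1P[I' eIE] : #|e :\ I| == 1%N by rewrite eqn_leq eI_le1 -ltnS -card_eI.
have I'V : I' \in V.
  by apply: (subsetP eV); have := set11 I'; rewrite -eIE => /setD1P[].
by rewrite eIE inE imset_f ?orbT.
Qed.

Lemma JHP J : reflect (exists2 e, e \in LV V :|: E & Jfam e J) (J \in JH V E).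
Proof. by rewrite inE; apply: (iffP existsP) => [[e /andP[]] | [e]]; exists e => //; apply/andP. Qed.

Lemma JH_single i : [set i] \in JH V E.
Proof.
apply/JHP; exists [set pblock V i]; first by rewrite inE imset_f ?pblockV.
rewrite /Jfam cover1 sub1set mem_pblock (cover_partition partV) inE /=.
apply/forall_inP => I /set1P ->.
by rewrite (setIidPl _) ?cards1 // sub1set mem_pblock (cover_partition partV) inE.
Qed.

Lemma JH_neq0 J : J \in JH V E -> J != set0.
Proof.
case/JHP => e /edge_neq0 /set0Pn[I Ie] /andP[_ /forall_inP J_meet].
by apply: contraTneq (J_meet I Ie) => ->; rewrite set0I cards0.
Qed.

Section Pivot.
Variables (J : {set 'I_n}) (k : 'I_n).
Hypotheses (J_JH : J \in JH V E) (kJ : k \in J).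

Lemma JH_pblock : J :&: pblock V k = [set k].
Proof. by case/JHP: J_JH => e /edge_subset eV Je; case: (Jfam_pblock tV eV Je kJ). Qed.

Lemma JH_delete : (J :\ k == set0) || (J :\ k \in JH V E).
Proof.
case/JHP: J_JH => e e_edge Je; have eV := edge_subset e_edge.
have [ke _] := Jfam_pblock tV eV Je kJ.
have Jk_fam := Jfam_delete tV eV Je kJ.
case/orP: (edge_delete e_edge ke) => [/eqP e0 | ek_edge].
  by move: Jk_fam; rewrite e0 /Jfam /cover big_set0 subset0 => /andP[->].
by apply/orP; right; apply/JHP; exists (e :\ pblock V k).
Qed.

Lemma JH_swap i : i \in pblock V k -> i |: (J :\ k) \in JH V E.
Proof.
case/JHP: J_JH => e e_edge Je ik; apply/JHP; exists e => //.
exact: (Jfam_swap tV (edge_subset e_edge) Je kJ ik).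
Qed.

End Pivot.

Variable R : realType.

Lemma SH_coord (w : {ffun idx (JH V E) -> R}) J :
  SH V E w -> J \in JH V E -> coord w J = \prod_(i in J) wi w i.
Proof.
case=> _ _ w_prod J_JH; case: (ltnP 1 #|J|) => [J_gt1 | J_le1].
  by rewrite (coord_Sub _ J_JH) w_prod.
have /cards1P[j ->] : #|J| == 1%N by rewrite eqn_leq J_le1 card_gt0 JH_neq0.
by rewrite big_set1.
Qed.

Section Projection.
Variable D : {set 'I_n}.

Lemma JHle_JH J : J \in JHle V E D -> J \in JH V E.
Proof. by case/setIdP. Qed.

Lemma JHle_notin_D J i : J \in JHle V E D -> i \in J -> i \notin D.
Proof. by case/setIdP => _ /subsetP JD /JD; rewrite inE. Qed.

Lemma JHle_single i : i \notin D -> [set i] \in JHle V E D.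
Proof. by move=> iD; rewrite inE JH_single sub1set inE. Qed.

Lemma coord_projle (w : {ffun idx (JH V E) -> R}) J :
  J \in JHle V E D -> coord (projle V E D w) J = coord w J.
Proof. by move=> J_le; rewrite (coord_Sub _ J_le) ffunE. Qed.

Lemma wi_projle (w : {ffun idx (JH V E) -> R}) i :
  i \notin D -> wi (projle V E D w) i = wi w i.
Proof. by move=> iD; rewrite /wi coord_projle ?JHle_single. Qed.

Lemma SHle_projle (w : {ffun idx (JH V E) -> R}) : SH V E w -> SHle V E D (projle V E D w).
Proof.
move=> Sw; have [w01 w_sum _] := Sw; split.
- by move=> J; rewrite ffunE; apply: binary_coord.
- move=> I IV; under eq_bigr => i /setDP[_ iD] do rewrite wi_projle //.
  rewrite -(w_sum I IV) [X in _ <= X](big_setID D) /= lerDr.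
  by apply: sumr_ge0 => i _; apply/binary_ge0/binary_coord.
- move=> J _; rewrite ffunE (SH_coord Sw (JHle_JH (valP J))).
  by apply: eq_bigr => i iJ; rewrite wi_projle // (JHle_notin_D (valP J)).
Qed.

Lemma affmap_projle : affmap (@projle n R V E D).
Proof.
apply: (affmap_select (h := fun J => Sub (val J) (JHle_JH (valP J)))) => x J.
by rewrite ffunE (coord_Sub _ (JHle_JH (valP J))).
Qed.

Lemma dotv_projle (a x : {ffun idx (JH V E) -> R}) :
  (forall J, a J != 0 -> val J \in JHle V E D) ->
  dotv (projle V E D a) (projle V E D x) = dotv a x.
Proof.
move=> a_supp; pose F S := coord a S * coord x S.
have JHle_sub : JHle V E D \subset JH V E by apply/subsetP => J /JHle_JH.
transitivity (\sum_(S in JH V E) F S); last first.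
  by rewrite big_sub; apply: eq_bigr => j _; rewrite /F !coord_val.
rewrite (big_setID (JHle V E D)) /= (setIidPr JHle_sub).
rewrite [X in _ + X]big1 ?addr0 => [|S /setDP[S_JH S_le]].
  by rewrite big_sub; apply: eq_bigr => J _; rewrite !ffunE.
by rewrite /F (coord_Sub a S_JH) (eqP (contraNT (a_supp (Sub S S_JH)) S_le)) mul0r.
Qed.

End Projection.

Variable ibar : {set 'I_n} -> 'I_n.
Hypothesis ibarV : forall I, I \in V -> ibar I \in I.
Local Notation D := (ibar @: V).

Lemma pblock_ibar I : I \in V -> pblock V (ibar I) = I.
Proof. by move=> IV; rewrite (def_pblock tV IV (ibarV IV)). Qed.

Lemma mem_D i : (i \in D) = (i == ibar (pblock V i)).
Proof.
apply/imsetP/eqP => [[I IV ->] | ->]; first by rewrite pblock_ibar.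
by exists (pblock V i); rewrite ?pblockV.
Qed.

Lemma block_meet_D I : I \in V -> I :&: D = [set ibar I].
Proof.
move=> IV; apply/setP => x; rewrite !inE mem_D.
case: (boolP (x \in I)) => xI; first by rewrite (def_pblock tV IV xI).
by apply/esym/negbTE; apply: contraNneq xI => ->; apply: ibarV.
Qed.

Local Notation affine_proj := (affine_through (@SH n R V E) (projle V E D)).

Lemma monomial_affine_disjoint J :
  J :&: D = set0 -> (J == set0) || (J \in JH V E) ->
  affine_proj (fun w => \prod_(i in J) wi w i).
Proof.
move=> JD0 /orP[/eqP -> | J_JH].
  by apply: eq_affine_through (affine_through_cst _ _ 1) => w _; rewrite big_set0.
have J_le : J \in JHle V E D by rewrite inE J_JH -disjoints_subset -setI_eq0 JD0 /=.
apply: eq_affine_through (affine_through_proj _ _ (Sub J J_le)) => w Sw.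
by rewrite ffunE SH_coord.
Qed.

Lemma monomial_affine J :
  (J == set0) || (J \in JH V E) -> affine_proj (fun w => \prod_(i in J) wi w i).
Proof.
have [m] := ubnP #|J :&: D|; elim: m J => // m IH J; rewrite ltnS => JD J_JH.
case: (set_0Vmem (J :&: D)) => [JD0 | [k /setIP[kJ kD]]].
  exact: monomial_affine_disjoint.
have {}J_JH : J \in JH V E by case/orP: J_JH => // /eqP J0; rewrite J0 inE in kJ.
have k_ibar : k = ibar (pblock V k) by apply/eqP; rewrite -mem_D.
have card_Jk : (#|(J :\ k) :&: D| < m)%N.
  by move: JD; rewrite setIDAC (cardsD1 k (J :&: D)) inE kJ kD.
apply: (eq_affine_through (h1 := fun w => \prod_(j in J :\ k) wi w j -
    \sum_(i in pblock V k :\ k) \prod_(j in i |: (J :\ k)) wi w j)).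
  move=> w [_ w_sum _].
  by rewrite (prod_pivot (JH_pblock J_JH kJ) (w_sum _ (pblockV k))).
apply: affine_throughB; first exact: IH card_Jk (JH_delete J_JH kJ).
apply: affine_through_sum => i /setD1P[ik i_blk].
apply: IH; last by rewrite JH_swap ?orbT.
have iD : i \notin D.
  by rewrite mem_D (def_pblock tV (pblockV k) i_blk) -k_ibar.
by rewrite setIUl (disjoint_setI0 _) ?set0U // disjoints1.
Qed.

Definition lift_coord (v : {ffun idx (JHle V E D) -> R}) i : R :=
  if i \in D then 1 - \sum_(j in pblock V i :\: D) wi v j else wi v i.

Definition liftle (v : {ffun idx (JHle V E D) -> R}) : {ffun idx (JH V E) -> R} :=
  [ffun J : idx (JH V E) => \prod_(i in val J) lift_coord v i].

Lemma wi_liftle v i : wi (liftle v) i = lift_coord v i.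
Proof. by rewrite /wi /coord insubT ?JH_single // => ?; rewrite ffunE big_set1. Qed.

Lemma binary_lift_coord v i : SHle V E D v -> binary (lift_coord v i).
Proof.
case=> v01 v_sum _; rewrite /lift_coord; case: ifP => _; last exact: binary_coord.
have [-> | ->] := binary_sum (fun j _ => binary_coord [set j] v01) (v_sum _ (pblockV i)).
  by rewrite subr0; right.
by rewrite subrr; left.
Qed.

Lemma SH_liftle v : SHle V E D v -> SH V E (liftle v).
Proof.
move=> Sv; split.
- by move=> J; rewrite ffunE; apply: binary_prod => i _; apply: binary_lift_coord.
- move=> I IV; under eq_bigr do rewrite wi_liftle.
  rewrite (big_setID D) /= block_meet_D // big_set1 /lift_coord imset_f //.
  rewrite pblock_ibar // [X in _ + X](eq_bigr (wi v)) ?subrK // => i /setDP[_].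
  by move/negbTE ->.
- by move=> J _; rewrite ffunE; apply: eq_bigr => i _; rewrite wi_liftle.
Qed.

Lemma projle_liftle v : SHle V E D v -> projle V E D (liftle v) = v.
Proof.
case=> _ _ v_prod; apply/ffunP => J.
rewrite ffunE (coord_Sub _ (JHle_JH (valP J))) ffunE /=.
under eq_bigr => i iJ do rewrite /lift_coord (negbTE (JHle_notin_D (valP J) iJ)).
case: (ltnP 1 #|val J|) => [J_gt1 | J_le1]; first by rewrite v_prod.
have /cards1P[j Jj] : #|val J| == 1%N.
  by rewrite eqn_leq J_le1 card_gt0 (JH_neq0 (JHle_JH (valP J))).
by rewrite Jj big_set1 /wi -Jj coord_val.
Qed.

Lemma MCH_affine_bij_MCHle :
  exists T, affine_bij (@MCH n R V E) (MCHle V E D) (projle V E D) T.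
Proof.
have [T [aff_T TK]] : exists T, affmap T /\
    forall w : {ffun idx (JH V E) -> R}, SH V E w -> T (projle V E D w) = w.
  apply: affine_retraction => J; have J_JH := valP J.
  apply: eq_affine_through (monomial_affine (_ : (val J == set0) || _)); last first.
    by rewrite J_JH orbT.
  by move=> w Sw; rewrite -SH_coord // coord_val.
have T_liftle v : SHle V E D v -> T v = liftle v.
  by move=> Sv; rewrite -{1}(projle_liftle Sv) TK //; apply: SH_liftle.
exists T; apply: conv_affine_bij; split=> //.
- exact: affmap_projle.
- exact: SHle_projle.
- by move=> v Sv; rewrite T_liftle //; apply: SH_liftle.
- by move=> v Sv; rewrite T_liftle // projle_liftle.
Qed.

End Hypergraph.

Unset Implicit Arguments.

Theorem corollary3p5 (R : realType) (n : nat)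
  (V : {set {set 'I_n}}) (E : {set {set {set 'I_n}}})
  (ibar : {set 'I_n} -> 'I_n)
  (a : {ffun idx (JH V E) -> R}) (delta : R) :
  (0 < n)%N ->
  partition V [set: 'I_n] ->
  (forall I : {set 'I_n}, I \in V -> (1 < #|I|)%N) ->
  (forall e : {set {set 'I_n}}, e \in E -> e \subset V /\ (1 < #|e|)%N) ->
  (forall e e' : {set {set 'I_n}}, e \in E -> e' \subset e -> (1 < #|e'|)%N -> e' \in E) ->
  (forall I : {set 'I_n}, I \in V -> ibar I \in I) ->
  valid_ineq (MCH V E) a delta ->
  (forall J : idx (JH V E), a J != 0 -> val J \in JHle V E (ibar @: V)) ->
  facet_inducing (MCH V E) a delta <->
  facet_inducing (MCHle V E (ibar @: V)) (projle V E (ibar @: V) a) delta.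
Proof.
move=> _ partV _ E_sub E_down ibarV _ a_supp.
have [T proj_bij] := MCH_affine_bij_MCHle partV E_sub E_down R ibarV.
apply: facet_inducing_affine_bij proj_bij _ => x _.
exact: dotv_projle.
Qed.
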